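(* Let $n\in\mathbb N$, $\beta>0$, real numbers $\kappa_{n,0},\dots,\kappa_{n,n}$ be given, $\mathbb H=L^2(\mathbb R)$, $(\mathcal Af)(x)=f(x+1)$, $g_n=\sum_{j=0}^nj!\,\kappa_{n,j}\mathbb 1_{[-j,-j+1]}$, and $\bar{\mathcal A}_n:=\mathcal A-\beta\langle g_n,\cdot\rangle\mathbb 1_{[0,1]}$. Then for any $k\in\mathbb N\cup\{0\}$, $$\bar{\mathcal A}_n^k\mathbb 1_{[0,1]}=\sum_{i=0}^k\gamma(i,k)\mathbb 1_{[-i,-i+1]},$$ where $\gamma(0,0)=1$ and, for all $k\ge1$, $$\gamma(i,k)=\begin{cases}\gamma(i-1,k-1),& i=1,\dots,k,\\ \sum_{j=0}^{(k-1)\wedge n}(-\beta)\,j!\,\kappa_{n,j}\,\gamma(j,k-1),& i=0.\end{cases}$$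
   Context: In the paper, $\kappa_{n,k}$ are the coefficients of the Bernstein polynomial approximation $K_n(t)=\sum_{k=0}^n\kappa_{n,k}t^k$ of a kernel $K$, but the identity holds for the stated definitions. $\langle\cdot,\cdot\rangle$ is the $L^2(\mathbb R)$ inner product. *)

From HB Require Import structures.
From mathcomp Require Import all_boot all_order all_algebra.
From mathcomp Require Import all_classical all_reals all_analysis.
Set Implicit Arguments. Unset Strict Implicit. Unset Printing Implicit Defensive.
Import Order.TTheory GRing.Theory Num.Theory.
Local Open Scope classical_set_scope.
Local Open Scope ring_scope.

Definition ind (R : realType) (a b : R) : R -> R := \1_(`[a, b]%classic).

Definition l2inner (R : realType) (f g : R -> R) : R :=
  Rintegral (@lebesgue_measure R) setT (fun x => f x * g x).

Definition gn (R : realType) (n : nat) (kappa : nat -> R) : R -> R :=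
  fun x => \sum_(j < n.+1) (j`!)%:R * kappa j * ind (- (j%:R)) (- (j%:R) + 1) x.

Definition shiftA (R : realType) (f : R -> R) : R -> R := fun x => f (x + 1).

Definition Abar (R : realType) (n : nat) (beta : R) (kappa : nat -> R)
  (f : R -> R) : R -> R :=
  fun x => shiftA f x - beta * l2inner (gn n kappa) f * ind 0 1 x.

Fixpoint gamma (R : realType) (n : nat) (beta : R) (kappa : nat -> R)
  (i k : nat) {struct k} : R :=
  match k with
  | 0 => if i == 0%N then 1 else 0
  | k'.+1 =>
      match i with
      | 0 => \sum_(j < (minn k' n).+1)
               (- beta) * (j`!)%:R * kappa j * gamma n beta kappa j k'
      | i'.+1 => gamma n beta kappa i' k'
      end
  end.

From HB Require Import structures.
From mathcomp Require Import all_boot all_order all_algebra.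
From mathcomp Require Import all_classical all_reals all_analysis.
From mathcomp Require Import measurable_realfun.
Import Order.TTheory GRing.Theory Num.Theory.
Local Open Scope classical_set_scope.
Local Open Scope ring_scope.

(* The indicators e_i of the unit intervals [-i, -i+1] are orthonormal in
   L^2(R), since two distinct ones overlap in at most one point.  Hence
   <g_n, sum_(i<p) b_i e_i> = sum_(j < min(n+1, p)) j! kappa_j b_j, and as the
   shift sends e_i to e_(i+1), Abar_n maps sum_(i<p) b_i e_i to
   -beta <g_n, sum_(i<p) b_i e_i> e_0 + sum_(i<p) b_i e_(i+1).  On coefficients
   this is the recursion defining gamma, so induction on k yields the identity
   at every point x, for any real beta. *)

Section integrable_lemmas.
Context {d : measure_display} {T : measurableType d} {R : realType}.
Variables (mu : {measure set T -> \bar R}) (D : set T) (mD : measurable D).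

Lemma integrable_indic_lty (A : set T) : measurable A -> (mu A < +oo)%E ->
  mu.-integrable setT (EFin \o \1_A).
Proof.
move=> mA muA; apply/integrableP; split.
  by apply/measurable_EFinP; exact: measurable_indic.
rewrite (eq_integral (fun x => (\1_A x)%:E)); last first.
  by move=> x _; rewrite /= ger0_norm.
by rewrite integral_indic // setIT.
Qed.

Variables (I : Type) (f : I -> T -> R).
Hypothesis intf : forall i, mu.-integrable D (EFin \o f i).

Lemma integrable_Rsum (s : seq I) (P : pred I) :
  mu.-integrable D (EFin \o (fun x => \sum_(i <- s | P i) f i x)).
Proof.
apply: (eq_integrable mD (fun x => \sum_(i <- s | P i) (f i x)%:E)).
  by move=> x _; rewrite /= sumEFin.
by apply: (integrable_sum mD) => i _; exact: intf.
Qed.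

Lemma Rintegral_sum (s : seq I) (P : pred I) :
  \int[mu]_(x in D) (\sum_(i <- s | P i) f i x) =
  \sum_(i <- s | P i) \int[mu]_(x in D) f i x.
Proof.
rewrite /Rintegral; under eq_integral do rewrite -sumEFin.
rewrite (integral_sum mD) // sum_fine // => i _.
exact: (integrable_fin_num mD (intf i)).
Qed.

End integrable_lemmas.

Lemma sum_ord_delta {R : pzSemiRingType} p j (F : nat -> R) :
  \sum_(i < p) F i * (j == i :> nat)%:R = if (j < p)%N then F j else 0.
Proof.
have [jp|pj] := ltnP j p.
  rewrite (bigD1 (Ordinal jp)) //= eqxx mulr1 big1 ?addr0 // => i.
  by rewrite -val_eqE eq_sym => /negbTE /= ->; rewrite mulr0.
by rewrite big1 // => i _; rewrite gtn_eqF ?mulr0 // (leq_trans (ltn_ord i)).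
Qed.

Lemma sum_ord_truncate {R : nmodType} m p (F : nat -> R) :
  \sum_(j < m) (if (j < p)%N then F j else 0) = \sum_(j < minn m p) F j.
Proof.
rewrite -big_mkcond (big_ord_widen m F (geq_minl m p)).
by apply: eq_bigl => j; rewrite leq_min ltn_ord.
Qed.

Section unit_indicators.
Context {R : realType}.
Notation mu := (@lebesgue_measure R).

Definition unit_itv (i : nat) : set R := `[- i%:R, - i%:R + 1]%classic.
Definition unit_ind (i : nat) : R -> R := ind (- i%:R) (- i%:R + 1).

Lemma ind_shift (a b x : R) : ind a b (x + 1) = ind (a - 1) (b - 1) x.
Proof.
rewrite /ind !indicE; congr (_%:R).
by rewrite !set_itvE !mem_setE -!topredE /= !lerBlDr lerBrDr.
Qed.

Lemma unit_ind_shift i x : unit_ind i (x + 1) = unit_ind i.+1 x.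
Proof.
by rewrite /unit_ind ind_shift -addn1 natrD opprD addrNK addrK.
Qed.

Lemma measurable_unit_itvI i j : measurable (unit_itv i `&` unit_itv j).
Proof. by apply: measurableI; exact: measurable_itv. Qed.

Lemma lebesgue_measure_unit_itvI i j :
  mu (unit_itv i `&` unit_itv j) = (i == j)%:R%:E.
Proof.
wlog ij : i j / (i <= j)%N.
  by move=> wlog; have [/wlog|/ltnW/wlog] := leqP i j; rewrite // setIC eq_sym.
have [<-|neq_ij] := eqVneq i j.
  rewrite setIid lebesgue_measure_itv /= lte_fin ltrDl ltr01 -EFinD.
  by rewrite addrAC subrr add0r.
apply/eqP; rewrite eq_le measure_ge0 andbT.
apply: (@le_trans _ _ (mu [set - i%:R])); last by rewrite lebesgue_measure_set1.
apply: le_measure; rewrite ?inE;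
  [exact: measurable_unit_itvI | exact: measurable_set1 |].
move=> x []; rewrite /unit_itv /= !in_itv /= => /andP[ix _] /andP[_ xj].
apply/eqP; rewrite eq_le ix (le_trans xj) //.
by rewrite -lerBrDr -opprD lerN2 natr1 ler_nat ltn_neqAle neq_ij.
Qed.

Lemma unit_ind_mul i j : (fun x => unit_ind i x * unit_ind j x) =
  \1_(unit_itv i `&` unit_itv j).
Proof. by rewrite indicI. Qed.

Lemma integrable_unit_ind_mul i j :
  mu.-integrable setT (EFin \o (fun x => unit_ind i x * unit_ind j x)).
Proof.
rewrite unit_ind_mul; apply: integrable_indic_lty.
  exact: measurable_unit_itvI.
by rewrite /= lebesgue_measure_unit_itvI ltry.
Qed.

Lemma l2inner_unit_ind i j : l2inner (unit_ind i) (unit_ind j) = (i == j)%:R.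
Proof.
rewrite /l2inner unit_ind_mul /Rintegral integral_indic ?setIT //.
  by rewrite /= lebesgue_measure_unit_itvI.
exact: measurable_unit_itvI.
Qed.

Lemma l2inner_sum_unit_ind m p (c b : nat -> R) :
  l2inner (fun x => \sum_(j < m) c j * unit_ind j x)
          (fun x => \sum_(i < p) b i * unit_ind i x) =
  \sum_(j < minn m p) c j * b j.
Proof.
pose term j i x := c j * b i * (unit_ind j x * unit_ind i x).
have int_term j i : mu.-integrable setT (EFin \o term j i).
  apply: (@eq_integrable _ _ _ mu setT measurableT
    (fun x => (c j * b i)%:E * (unit_ind j x * unit_ind i x)%:E)%E) => //.
  exact/integrableZl/integrable_unit_ind_mul.
rewrite /l2inner (@eq_Rintegral _ _ _ mu _
  (fun x => \sum_(j < m) \sum_(i < p) term j i x)); last first.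
  move=> x _ /=; rewrite mulr_suml; apply: eq_bigr => j _.
  by rewrite mulr_sumr; apply: eq_bigr => i _; rewrite mulrACA.
rewrite Rintegral_sum //; last by move=> j; exact: integrable_Rsum.
rewrite -(sum_ord_truncate _ _ (fun j => c j * b j)); apply: eq_bigr => j _.
rewrite Rintegral_sum // -(sum_ord_delta _ _ (fun i => c j * b i)).
apply: eq_bigr => i _.
by rewrite -l2inner_unit_ind RintegralZl //; exact: integrable_unit_ind_mul.
Qed.

End unit_indicators.

Section Abar_iterates.
Context {R : realType} (n : nat) (beta : R) (kappa : nat -> R).

Lemma Abar_sum_unit_ind p (b : nat -> R) :
  Abar n beta kappa (fun x => \sum_(i < p) b i * unit_ind i x) =
  fun x => - beta * (\sum_(j < minn n.+1 p) (j`!)%:R * kappa j * b j)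
             * unit_ind 0 x
           + \sum_(i < p) b i * unit_ind i.+1 x.
Proof.
apply/funext => x.
rewrite /Abar /shiftA.
rewrite (l2inner_sum_unit_ind n.+1 p (fun j => (j`!)%:R * kappa j)).
under eq_bigr do rewrite unit_ind_shift.
by rewrite addrC -!mulNr /unit_ind oppr0 add0r.
Qed.

Lemma iter_Abar_ind01 k :
  iter k (Abar n beta kappa) (ind 0 1) =
  fun x => \sum_(i < k.+1) gamma n beta kappa i k * unit_ind i x.
Proof.
elim: k => [|k IH].
  by apply/funext => x; rewrite big_ord1 mul1r /unit_ind oppr0 add0r.
rewrite iterS IH (Abar_sum_unit_ind k.+1 (fun i => gamma n beta kappa i k)).
apply/funext => x.
rewrite [RHS]big_ord_recl /= minnSS minnC mulr_sumr.
by congr (_ * _ + _); apply: eq_bigr => j _; rewrite !mulrA.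
Qed.

End Abar_iterates.

Theorem proposition3p2 (R : realType) (n : nat) (beta : R) (kappa : nat -> R)
  (hbeta : 0 < beta) (k : nat) :
  {ae @lebesgue_measure R, forall x : R,
     iter k (Abar n beta kappa) (ind 0 1) x =
     \sum_(i < k.+1) gamma n beta kappa i k * ind (- (i%:R)) (- (i%:R) + 1) x}.
Proof. by apply: aeW => x; rewrite iter_Abar_ind01. Qed.
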